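(* Let $p\colon E\to B$ be an arc-covering. Then the following are equivalent: (a) $p$ is an arc-hedgehog covering; (b) for every $e_0\in E$ and every open subset $U$ of $E$ containing $e_0$, there is a neighborhood $V$ of $b_0=p(e_0)$ in $B$ such that the path component of $p^{-1}(V)$ containing $e_0$ is a subset of $U$.
   Context: All maps are continuous. A Peano space is a connected, locally path-connected space. For a class $\mathcal{P}$ of spaces, a map $p\colon E\to B$ is a $\mathcal{P}$-covering if for every $e_0\in E$, every $X\in\mathcal{P}$, every $x_0\in X$ and every map $f\colon X\to B$ with $f(x_0)=p(e_0)$ there is a map $g\colon X\to E$ with $p\circ g=f$ and $g(x_0)=e_0$, and such lifts are unique ($g=h$ whenever $g,h\colon X\to E$, $p\circ g=p\circ h$ and $g(x_0)=h(x_0)$ for some $x_0\in X$). An arc-covering is a $\mathcal{P}$-covering for $\mathcal{P}=\{[0,1]\}$. A directed wedge is the wedge $(Z,z_0)=\bigvee_{s\in S}(Z_s,z_s)$ of pointed Peano spaces indexed by a directed set $S$, with the topology: $U\subset Z\setminus\{z_0\}$ is open iff $U\cap Z_s$ is open in $Z_s$ for every $s$; a set $U\ni z_0$ is an open neighborhood of $z_0$ iff $U\cap Z_s$ is open in $Z_s$ for every $s$ and there is $t\in S$ with $Z_s\subset U$ for all $s>t$. An arc-hedgehog is a directed wedge in which each $(Z_s,z_s)$ is homeomorphic to $([0,1],0)$. An arc-hedgehog covering is a $\mathcal{P}$-covering where $\mathcal{P}$ is the class of all arc-hedgehogs. *)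

From HB Require Import structures.
From mathcomp Require Import all_boot all_order all_algebra.
From mathcomp Require Import all_classical all_reals topology.
From mathcomp Require Import Rstruct Rstruct_topology.
From Stdlib Require Import Rdefinitions.

Set Implicit Arguments.
Unset Strict Implicit.
Unset Printing Implicit Defensive.

Import Order.TTheory GRing.Theory Num.Theory.
Local Open Scope classical_set_scope.
Local Open Scope ring_scope.

Definition I01 : topologicalType := set_type (`[0, 1]%classic : set R).

Lemma I01_0_mem : (0 : R) \in (`[0, 1]%classic : set R).
Proof. by apply/mem_set; rewrite /= in_itv /= lexx ler01. Qed.
Lemma I01_1_mem : (1 : R) \in (`[0, 1]%classic : set R).
Proof. by apply/mem_set; rewrite /= in_itv /= lexx ler01. Qed.

Definition i0 : I01 := exist _ (0 : R) I01_0_mem.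
Definition i1 : I01 := exist _ (1 : R) I01_1_mem.

(** Lifting property (existence and uniqueness of lifts) for maps from a
    space X, given abstractly by its carrier and a notion of continuity of maps
    X -> (topological space). *)
Definition lifting_property (X : Type)
    (cont : forall T : topologicalType, (X -> T) -> Prop)
    (E B : topologicalType) (p : E -> B) : Prop :=
  (forall (e0 : E) (x0 : X) (f : X -> B), cont B f -> f x0 = p e0 ->
     exists g : X -> E, [/\ cont E g, p \o g = f & g x0 = e0])
  /\
  (forall (g h : X -> E), cont E g -> cont E h -> p \o g = p \o h ->
     (exists x0 : X, g x0 = h x0) -> g = h).

(** Arc-covering: P-covering for P = {[0,1]}. *)
Definition arc_covering (E B : topologicalType) (p : E -> B) : Prop :=
  lifting_property (fun (T : topologicalType) (f : I01 -> T) => continuous f) p.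

Definition directed (S : Type) (le : S -> S -> Prop) : Prop :=
  [/\ inhabited S, (forall a, le a a),
      (forall a b c, le a b -> le b c -> le a c) &
      (forall a b, exists c, le a c /\ le b c)].

Definition dlt (S : Type) (le : S -> S -> Prop) (t s : S) : Prop :=
  le t s /\ ~ le s t.

(** Carrier of the arc-hedgehog (directed wedge of copies of ([0,1],0)):
    [None] is the wedge point z0, [Some (s, t)] is the point t in ]0,1] of the
    s-th arc. *)
Definition hedgehog (S : Type) : Type := option (S * set_type (`]0, 1]%classic : set R)).

Definition hh_pt (S : Type) (s : S) (t : I01) : hedgehog S :=
  omap (fun u => (s, u)) (insub (sval t) : option (set_type (`]0, 1]%classic : set R))).

Definition hh_open (S : Type) (le : S -> S -> Prop) (U : set (hedgehog S)) : Prop :=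
  (forall s : S, open [set t : I01 | U (hh_pt s t)]) /\
  (U None -> exists t : S, forall s : S, dlt le t s -> forall x : I01, U (hh_pt s x)).

Definition hh_continuous (S : Type) (le : S -> S -> Prop) (T : topologicalType)
    (f : hedgehog S -> T) : Prop :=
  forall V : set T, open V -> hh_open le (f @^-1` V).

(** Arc-hedgehog covering: P-covering for P = all arc-hedgehogs. *)
Definition arc_hedgehog_covering (E B : topologicalType) (p : E -> B) : Prop :=
  forall (S : Type) (le : S -> S -> Prop), directed le ->
    lifting_property (hh_continuous le) p.

(** The path component of A containing e0 (empty if e0 is not in A). *)
Definition path_component (E : topologicalType) (A : set E) (e0 : E) : set E :=
  [set e | exists gamma : I01 -> E,
     [/\ continuous gamma, gamma i0 = e0, gamma i1 = e &
         forall t, A (gamma t)]].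

(** (b) => (a): lift each arc of the hedgehog separately, starting from one
    common lift of the wedge point, and glue the lifts.  Continuity at the
    wedge point comes from (b): almost every arc of the base map lies in the
    neighbourhood V given by (b), and every point of its lift is joined to the
    wedge point by an initial segment of that lift inside p^-1 V.
    (a) => (b): if (b) fails for U, choose for every neighbourhood V of p e0 a
    path in p^-1 V starting at e0 and ending outside U.  Their projections,
    indexed by the neighbourhoods directed by reverse inclusion, form a
    continuous map out of an arc-hedgehog; by uniqueness of arc lifts its lift
    restricts to the chosen paths on every arc, so no tail of arcs is mapped
    into U, contradicting continuity of the lift at the wedge point. *)
From mathcomp Require Import all_boot all_order all_algebra.
From mathcomp Require Import all_classical all_reals topology normedtype.
From mathcomp Require Import Rstruct Rstruct_topology.
From Stdlib Require Import Rdefinitions.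
Import Order.TTheory GRing.Theory Num.Theory.
Local Open Scope classical_set_scope.
Local Open Scope ring_scope.
Set Implicit Arguments.
Unset Strict Implicit.

Lemma in_itv01 (x : R) : (x \in (`[0, 1]%classic : set R)) = (0 <= x <= 1).
Proof. by apply/idP/idP => [/set_mem|h]; [rewrite /= in_itv | apply/mem_set; rewrite /= in_itv]. Qed.

Lemma in_itv01o (x : R) : (x \in (`]0, 1]%classic : set R)) = (0 < x <= 1).
Proof. by apply/idP/idP => [/set_mem|h]; [rewrite /= in_itv | apply/mem_set; rewrite /= in_itv]. Qed.

Lemma I01_mul_mem (t x : I01) : sval t * sval x \in (`[0, 1]%classic : set R).
Proof.
case: t => t /=; case: x => x /=; rewrite !in_itv01 => /andP[t0 t1] /andP[x0 x1].
by rewrite mulr_ge0 //= mulr_ile1.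
Qed.

(** The reparametrisation [t |-> t * x] of [0,1] onto [0,x]: composing a path
    with it gives its initial segment up to time x. *)
Definition I01_scale (x t : I01) : I01 :=
  exist (fun r : R => r \in (`[0, 1]%classic : set R)) _ (I01_mul_mem t x).

Lemma I01_scale_continuous (x : I01) : continuous (I01_scale x).
Proof.
apply: continuous_comp_initial => t.
apply: (@continuous_comp _ _ _ set_val (fun r : R => r * sval x)).
  exact: initial_continuous.
exact: mulrr_continuous.
Qed.

Lemma I01_scale0 x : I01_scale x i0 = i0.
Proof. by apply: val_inj; rewrite /= mul0r. Qed.

Lemma I01_scale1 x : I01_scale x i1 = x.
Proof. by apply: val_inj; rewrite /= mul1r. Qed.

Lemma itv01o_sub_mem (u : set_type (`]0, 1]%classic : set R)) :
  sval u \in (`[0, 1]%classic : set R).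
Proof. by case: u => u /=; rewrite in_itv01 in_itv01o => /andP[u0 ->]; rewrite ltW. Qed.

Definition I01_of_itv01o (u : set_type (`]0, 1]%classic : set R)) : I01 :=
  exist (fun r : R => r \in (`[0, 1]%classic : set R)) _ (itv01o_sub_mem u).

Section Hedgehog.
Variable S : Type.

Lemma hh_pt0 (s : S) : hh_pt s i0 = None.
Proof. by rewrite /hh_pt /= insubF //= in_itv01o ltxx. Qed.

Lemma hh_pt_I01_of_itv01o (s : S) u : hh_pt s (I01_of_itv01o u) = Some (s, u).
Proof.
rewrite /hh_pt; case: insubP => [v _ hv | ] /=.
  by congr (Some (_, _)); apply: val_inj; rewrite hv.
by case: u => u /= hu; rewrite hu.
Qed.

Lemma hh_continuous_arc (le : S -> S -> Prop) (T : topologicalType)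
    (f : hedgehog S -> T) :
  hh_continuous le f -> forall s, continuous (f \o hh_pt s).
Proof. by move=> hf s; apply/continuousP => V oV; exact: (hf V oV).1 s. Qed.

Variables (T : topologicalType) (c : T) (g : S -> I01 -> T).
Hypothesis g0 : forall s, g s i0 = c.

Definition hh_glue (z : hedgehog S) : T :=
  if z is Some (s, u) then g s (I01_of_itv01o u) else c.

Lemma hh_glue_pt s t : hh_glue (hh_pt s t) = g s t.
Proof.
rewrite /hh_pt; case: insubP => [u _ hu | t_not_pos] /=.
  by congr (g s _); apply: val_inj; rewrite /= hu.
suff -> : t = i0 by rewrite g0.
apply: val_inj; case: t t_not_pos => v /= v01; move: v01.
rewrite in_itv01o in_itv01 => /andP[v0 ->]; rewrite andbT -leNgt => v_le0.
by apply/eqP; rewrite eq_le v_le0.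
Qed.

Lemma hh_glue_continuous (le : S -> S -> Prop) :
  (forall s, continuous (g s)) ->
  (forall W : set T, open W -> W c ->
     exists t, forall s, dlt le t s -> forall x, W (g s x)) ->
  hh_continuous le hh_glue.
Proof.
move=> gc tail W oW; split => [s | /= Wc].
  have -> : [set t | W (hh_glue (hh_pt s t))] = g s @^-1` W.
    by apply/seteqP; split => t /=; rewrite hh_glue_pt.
  by move/continuousP: (gc s); apply.
by have [t ht] := tail W oW Wc; exists t => s st x; rewrite hh_glue_pt; exact: ht.
Qed.

End Hedgehog.
Arguments hh_continuous_arc [S le T f] _ s.

Section NbhsNat.
Variables (B : topologicalType) (b : B).

(** The neighbourhoods of b directed by reverse inclusion; the extra [nat]
    coordinate guarantees strict successors, which reverse inclusion alone
    does not provide (e.g. when {b} is a neighbourhood). *)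
Definition nbhs_nat := ({V : set B | nbhs b V} * nat)%type.

Definition nbhs_nat_le (s s' : nbhs_nat) : Prop :=
  sval s'.1 `<=` sval s.1 /\ leq s.2 s'.2.

Lemma nbhs_nat_directed : directed nbhs_nat_le.
Proof.
split.
- by constructor; exact: (exist _ setT filterT, 0%N).
- by move=> s; split.
- move=> s1 s2 s3 [h12 n12] [h23 n23]; split; last exact: leq_trans n23.
  by move=> x /h23 /h12.
- move=> [[V nV] n] [[W nW] m]; exists (exist _ (V `&` W) (filterI nV nW), maxn n m).
  by split; split => /=; [move=> x [] | exact: leq_maxl | move=> x [] | exact: leq_maxr].
Qed.

Lemma nbhs_nat_lt_succ (s : nbhs_nat) : dlt nbhs_nat_le s (s.1, s.2.+1).
Proof. by split; [split | case=> _ /=; rewrite ltnn]. Qed.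

End NbhsNat.

Lemma path_component_initial_segment (E : topologicalType) (A : set E)
    (gam : I01 -> E) :
  continuous gam -> (forall t, A (gam t)) ->
  forall x, path_component A (gam i0) (gam x).
Proof.
move=> gamc gamA x; exists (gam \o I01_scale x); split => /=.
- by move=> t; apply: continuous_comp; [exact: I01_scale_continuous | exact: gamc].
- by rewrite I01_scale0.
- by rewrite I01_scale1.
- by move=> t; exact: gamA.
Qed.

Section HedgehogLifts.
Variables (E B : topologicalType) (p : E -> B).
Hypothesis arc : arc_covering p.

Lemma hh_lift_arc (S : Type) (le : S -> S -> Prop) (g : hedgehog S -> E)
    (gam : I01 -> E) s :
  hh_continuous le g -> continuous gam -> p \o gam = p \o g \o hh_pt s ->
  gam i0 = g None -> g \o hh_pt s = gam.
Proof.
move=> gc gamc pgam gam0; apply: arc.2 => //.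
- exact: hh_continuous_arc gc s.
- by exists i0; rewrite /= hh_pt0.
Qed.

Lemma hh_lift_unique (S : Type) (le : S -> S -> Prop) (g h : hedgehog S -> E) :
  hh_continuous le g -> hh_continuous le h ->
  p \o g = p \o h -> (exists x0, g x0 = h x0) -> g = h.
Proof.
move=> gc hc pgh [x0 gh0].
have arc_eq s t : g (hh_pt s t) = h (hh_pt s t) -> g \o hh_pt s = h \o hh_pt s.
  move=> ght; apply: arc.2 => //; [exact: hh_continuous_arc gc s |
    exact: hh_continuous_arc hc s | | by exists t].
  by apply: funext => y; exact: (congr1 (fun F => F (hh_pt s y)) pgh).
have ghN : g None = h None.
  case: x0 gh0 => [[s u]|] // gh0.
  have := congr1 (fun F => F i0)
    (arc_eq s (I01_of_itv01o u) ltac:(by rewrite hh_pt_I01_of_itv01o)).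
  by rewrite /= hh_pt0.
apply: funext => -[[s u]|] //.
have := congr1 (fun F => F (I01_of_itv01o u)) (arc_eq s i0 ltac:(by rewrite hh_pt0)).
by rewrite /= hh_pt_I01_of_itv01o.
Qed.

Definition small_path_components : Prop :=
  forall (e0 : E) (U : set E), open U -> U e0 ->
    exists V : set B, nbhs (p e0) V /\ path_component (p @^-1` V) e0 `<=` U.

Lemma hh_lift_at_wedge (S : Type) (le : S -> S -> Prop) :
  small_path_components ->
  forall e1 f, hh_continuous le f -> f None = p e1 ->
  exists g, [/\ hh_continuous le g, p \o g = f & g None = e1].
Proof.
move=> small e1 f fc fN.
have arc_lift s : {gam : I01 -> E |
    [/\ continuous gam, p \o gam = f \o hh_pt s & gam i0 = e1]}.
  apply: cid; apply: arc.1; first exact: hh_continuous_arc fc s.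
  by rewrite /= hh_pt0.
pose gam s := sval (arc_lift s).
have gamc s : continuous (gam s) by case: (svalP (arc_lift s)).
have pgam s : p \o gam s = f \o hh_pt s by case: (svalP (arc_lift s)).
have gam0 s : gam s i0 = e1 by case: (svalP (arc_lift s)).
exists (hh_glue e1 gam); split => //.
- apply: hh_glue_continuous => // W oW We1.
  have [V [nV smallV]] := small e1 W oW We1.
  move: nV; rewrite nbhsE => -[V' [oV' V'e1] V'V].
  have [t ht] := (fc V' oV').2 ltac:(by rewrite /= fN).
  exists t => s ts x; apply: smallV; rewrite -(gam0 s).
  apply: path_component_initial_segment => // y; apply: V'V.
  by rewrite /= -[p _]/((p \o gam s) y) pgam; exact: ht.
- apply: funext => -[[s u]|] /=; last by rewrite fN.
  rewrite -(hh_pt_I01_of_itv01o s u).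
  exact: (congr1 (fun F => F (I01_of_itv01o u)) (pgam s)).
Qed.

Lemma small_path_components_hh_covering :
  small_path_components -> arc_hedgehog_covering p.
Proof.
move=> small S le _; split; last exact: hh_lift_unique.
move=> e0 [[s u]|] f fc fx0; last exact: hh_lift_at_wedge.
have [gam [gamc pgam gam_u]] := arc.1 e0 (I01_of_itv01o u) (f \o hh_pt s)
  (hh_continuous_arc fc s) ltac:(by rewrite /= hh_pt_I01_of_itv01o).
have fN : f None = p (gam i0).
  by rewrite -(hh_pt0 s) -[p _]/((p \o gam) i0) pgam.
have [g [gc pg gN]] := hh_lift_at_wedge small fc fN.
exists g; split => //; rewrite -gam_u.
suff <- : g \o hh_pt s = gam by rewrite /= hh_pt_I01_of_itv01o.
by apply: (hh_lift_arc gc) => //; rewrite pg.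
Qed.

Lemma hh_covering_small_path_components :
  continuous p -> arc_hedgehog_covering p -> small_path_components.
Proof.
move=> pc hh e0 U oU Ue0; apply: contrapT => not_small.
have escape (s : nbhs_nat (p e0)) : {gam : I01 -> E | [/\ continuous gam,
    gam i0 = e0, (forall t, sval s.1 (p (gam t))) & ~ U (gam i1)]}.
  apply: cid; apply: contrapT => no_escape; apply: not_small.
  exists (sval s.1); split; first exact: (svalP s.1).
  move=> e [gam [gamc gam0 gam1 gamV]]; apply: contrapT => notUe.
  by apply: no_escape; exists gam; split => //; rewrite gam1.
pose gam s := sval (escape s).
have gamc s : continuous (gam s) by case: (svalP (escape s)).
have gam0 s : gam s i0 = e0 by case: (svalP (escape s)).
have gamV s t : sval s.1 (p (gam s t)) by case: (svalP (escape s)) => _ _ gamV _; exact: gamV.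
have gamU s : ~ U (gam s i1) by case: (svalP (escape s)).
pose f := hh_glue (p e0) (fun s => p \o gam s).
have f0 s : (p \o gam s) i0 = p e0 by rewrite /= gam0.
have fc : hh_continuous (@nbhs_nat_le _ (p e0)) f.
  apply: hh_glue_continuous => // [s t | W oW We0].
    by apply: continuous_comp; [exact: gamc | exact: pc].
  have nW : nbhs (p e0) W by apply: open_nbhs_nbhs; split.
  by exists (exist _ W nW, 0%N) => s [[sW _] _] x; apply: sW; exact: gamV.
have [g [gc pg gN]] := (hh _ _ (nbhs_nat_directed (p e0))).1 e0 None f fc erefl.
have [t ht] := (gc U oU).2 ltac:(by rewrite /= gN).
pose s := (t.1, t.2.+1).
have lift_eq : g \o hh_pt s = gam s.
  apply: (hh_lift_arc gc) => //; last by rewrite gN gam0.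
  by rewrite pg; apply: funext => y /=; rewrite /f hh_glue_pt.
by apply: (gamU s); rewrite -lift_eq; exact: ht (nbhs_nat_lt_succ t) i1.
Qed.

End HedgehogLifts.

Theorem theorem3p5 (E B : topologicalType) (p : E -> B) :
  continuous p -> arc_covering p ->
  (arc_hedgehog_covering p <->
   (forall (e0 : E) (U : set E), open U -> U e0 ->
      exists V : set B, nbhs (p e0) V /\
        path_component (p @^-1` V) e0 `<=` U)).
Proof.
move=> pc arc; split; first exact: hh_covering_small_path_components.
exact: small_path_components_hh_covering.
Qed.
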